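(* Let $n,t,m,t'$ be positive integers with $n>m$, $t'\ge \frac{t\log(n-m)}{\log n}$ and $m\ge t'+2$. Then there exist a map $\mathcal{E}:\mathcal{S}_n\to\mathcal{S}_{n+t'}$ and a decoding map $\mathcal{D}$ such that for every $\sigma\in\mathcal{S}_n$ and every sequence $\pi_e$ obtained from $\pi=\mathcal{E}(\sigma)$ by at most $t$ stuck-at errors with threshold $m$ (as defined in the context), we have $\mathcal{D}(\pi_e)=\sigma$.
   Context: $\mathcal{S}_N$ denotes the set of permutations $\pi=(\pi(1),\ldots,\pi(N))$ of $[N]=\{1,\ldots,N\}$. Stuck-at errors with threshold $m$: a sequence $\pi_e\in[N]^N$ is obtained from $\pi\in\mathcal{S}_N$ by at most $t$ stuck-at errors if there is a set $I\subseteq[N]$ with $|I|\le t$ and $\pi(i)>m$ for all $i\in I$, such that $\pi_e(i)=\pi(i)-1$ for $i\in I$ and $\pi_e(i)=\pi(i)$ for $i\in[N]\setminus I$. Logarithms are to a common base (e.g. base 2). *)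

From mathcomp Require Import all_boot all_order all_fingroup.
From Stdlib Require Import Rdefinitions Raxioms RIneq Rpower.
Set Implicit Arguments. Unset Strict Implicit. Unset Printing Implicit Defensive.

(* A permutation pi of [N] = {1..N} is represented by p : 'S_N (a permutation of
   'I_N = {0..N-1}); its value at position i is  pval p i := (p i).+1 in {1..N}.
   Positions are indexed by 'I_N. *)
Definition pval (N : nat) (p : 'S_N) (i : 'I_N) : nat := (p i).+1.

Definition stuck_at (N m t : nat) (p : 'S_N) (pe : {ffun 'I_N -> nat}) : Prop :=
  exists I : {set 'I_N},
    [/\ #|I| <= t,
        (forall i, i \in I -> m < pval p i) &
        (forall i, pe i = if i \in I then (pval p i).-1 else pval p i)].

(* The hypothesis t' >= t log(n-m) / log n, with natural logarithms
   (the base is irrelevant). *)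
Definition log_cond (n t m t' : nat) : Prop :=
  Rle (Rdiv (Rmult (INR t) (ln (INR (n - m)))) (ln (INR n))) (INR t').

From Pilot Require Import Defs.
From Stdlib Require Import Rdefinitions Raxioms RIneq Rpower Rfunctions Lra.
From mathcomp Require Import all_boot all_order all_fingroup.
From mathcomp Require Import zify.
Set Implicit Arguments. Unset Strict Implicit. Unset Printing Implicit Defensive.

(* Call two permutations of [N] = [n + t'] confusable when some sequence arises from
   both by at most t stuck-at errors.  If p and p' are confusable, then q = p' o p^-1
   moves every value by at most one, so q is a product of disjoint transpositions
   (k k+1), determined by its set of rises {k | q k = k + 1}; a rise at k forces
   k >= m - 1, and there are at most t of them.  Hence p has at most f(N - m, t)
   confusable partners, where f(L, t) counts binary words of length L with at most t
   ones, no two adjacent.  A maximal family C of pairwise non-confusable permutations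
   dominates the confusability graph, so N! <= |C| f(N - m, t).  The hypothesis on t'
   is (n - m)^t <= n^t', which gives f(n - m + t', t) <= (n + 1)^t' <= N! / n!, so
   |C| >= n!: encode by any injection into C and decode by picking any codeword
   consistent with the received sequence. *)

Definition nonadj : seq bool -> bool := sorted (fun a b => ~~ (a && b)).

Fixpoint nonadj_seqs (L t : nat) : seq (seq bool) :=
  match L with
  | 0 => [:: [::]]
  | L1.+1 =>
    match L1 with
    | 0 => [:: false] :: (if t is _.+1 then [:: [:: true]] else [::])
    | L0.+1 => map (cons false) (nonadj_seqs L1 t) ++
               (if t is t0.+1 then map (fun s => [:: true, false & s]) (nonadj_seqs L0 t0)
                else [::])
    end
  end.

Definition nonadj_count (L t : nat) : nat := size (nonadj_seqs L t).

Lemma nonadj_seqsSS L t :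
  nonadj_seqs L.+2 t = map (cons false) (nonadj_seqs L.+1 t) ++
    (if t is t0.+1 then map (fun s => [:: true, false & s]) (nonadj_seqs L t0) else [::]).
Proof. by []. Qed.

Lemma mem_nonadj_seqs s t :
  nonadj s -> count id s <= t -> s \in nonadj_seqs (size s) t.
Proof.
have [k] := ubnP (size s); elim: k s t => // k IH [|b [|b' s]] t lt_s_k.
- by rewrite inE.
- by case: b {lt_s_k}; case: t => //= t; rewrite !inE.
rewrite [size _]/= nonadj_seqsSS mem_cat => /andP [bb' nadj_s] cnt_s.
have lt_s : (size s).+1 < k := lt_s_k; clear lt_s_k.
case: b bb' cnt_s => bb' cnt_s; last first.
  by rewrite (map_f (cons false)) // (IH (b' :: s)).
case: b' bb' nadj_s cnt_s => // _ nadj_s; case: t => // t cnt_s.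
by rewrite map_f ?orbT // IH //; [exact: ltnW | exact: path_sorted nadj_s].
Qed.

Lemma nonadj_countSS L t :
  nonadj_count L.+2 t = nonadj_count L.+1 t + (if t is t0.+1 then nonadj_count L t0 else 0).
Proof.
by rewrite /nonadj_count nonadj_seqsSS size_cat size_map; case: t => // t; rewrite size_map.
Qed.

Lemma nat_ind2 (P : nat -> Prop) :
  P 0 -> P 1 -> (forall n, P n -> P n.+1 -> P n.+2) -> forall n, P n.
Proof.
move=> P0 P1 PSS n; suff: P n /\ P n.+1 by case.
by elim: n => [|n [Pn PSn]]; split => //; apply: PSS.
Qed.

Lemma nonadj_count_t0 L : nonadj_count L 0 = 1.
Proof. by elim/nat_ind2: L => // L _ IH; rewrite nonadj_countSS IH. Qed.

Lemma nonadj_count_t1 L : nonadj_count L 1 = L.+1.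
Proof. by elim/nat_ind2: L => // L _ IH; rewrite nonadj_countSS IH nonadj_count_t0 addn1. Qed.

Lemma leq_nonadj_count t : {homo nonadj_count^~ t : L L' / L <= L'}.
Proof.
apply: homo_leq => [//|L2 L1 L3|[|L]].
- exact: leq_trans.
- by case: t.
- by rewrite nonadj_countSS leq_addr.
Qed.

Lemma leq_wexp2r m n e : m <= n -> m ^ e <= n ^ e.
Proof. by case: e => // e; rewrite leq_exp2r. Qed.

Lemma nonadj_count_ub_len L t : nonadj_count L t <= L.+1 ^ t.
Proof.
elim/nat_ind2: L t => [t|t|L IH IHS [|t]].
- by rewrite exp1n.
- by case: t => // t; rewrite expnS leq_pmulr ?expn_gt0.
- by rewrite nonadj_count_t0.
rewrite nonadj_countSS (leq_trans (leq_add (IHS t.+1) (IH t))) //.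
have le1 : L.+1 ^ t <= L.+3 ^ t by apply: leq_wexp2r; lia.
have le2 : L.+2 * L.+2 ^ t <= L.+2 * L.+3 ^ t by rewrite leq_mul2l leq_wexp2r.
rewrite !expnS; lia.
Qed.

Lemma nonadj_count_ub_exp2 L t : nonadj_count L.+1 t <= 2 ^ L + 1.
Proof.
elim/nat_ind2: L t => [t|t|L IH IHS t]; try by case: t.
rewrite nonadj_countSS; case: t => [|t]; first by rewrite nonadj_count_t0 addn1.
rewrite (leq_trans (leq_add (IHS t.+1) (IH t))) // !expnS.
have : 0 < 2 ^ L by rewrite expn_gt0.
lia.
Qed.

Lemma nonadj_count_ub_slack b t : nonadj_count (b + t).+1 t <= b.+2 ^ t + 1.
Proof.
elim: b t => [|b IH] [|[|t]]; rewrite ?nonadj_count_t0 ?nonadj_count_t1 ?expn1 //.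
- exact: nonadj_count_ub_exp2.
have -> : (b.+1 + t.+2).+1 = (b + t.+1).+3 by rewrite addSn !addnS.
have := IH t.+2; rewrite addnS => IH2.
rewrite nonadj_countSS (leq_trans (leq_add IH2 (IH t.+1))) //.
have : b.+2 ^ t.+1 < b.+3 ^ t.+1 by rewrite ltn_exp2r.
rewrite !(expnS b.+2 t.+1) (expnS b.+3 t.+1); nia.
Qed.

Lemma nonadj_count_ub a t t' n :
  0 < a -> 0 < t' -> a + t' <= n -> a ^ t <= n ^ t' -> nonadj_count (a + t') t <= n.+1 ^ t'.
Proof.
move=> a_gt0 t'_gt0 le_n le_pow.
have le_expS x : x <= n -> x ^ t' + 1 <= n.+1 ^ t' by rewrite addn1 ltn_exp2r.
have [le_tt'|lt_t't] := leqP t t'.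
  apply: leq_trans (nonadj_count_ub_len _ _) _.
  by rewrite (leq_trans (leq_pexp2l _ le_tt')) // leq_wexp2r.
(* For t > t' the slack bound turns a ^ t <= n ^ t' into the claim; it needs a >= 2,
   and for a = 1 the crude bound 2 ^ t' + 1 suffices. *)
case: a a_gt0 le_n le_pow => [|[|b]] // _ le_n le_pow.
  by rewrite add1n (leq_trans (nonadj_count_ub_exp2 _ _)) // le_expS // (leq_trans _ le_n).
have le_L : b.+2 + t' <= (b + t).+1 by lia.
apply: leq_trans (leq_nonadj_count t le_L) _.
rewrite (leq_trans (nonadj_count_ub_slack _ _)) //.
by rewrite (leq_trans _ (le_expS _ (leqnn n))) ?leq_add2r.
Qed.

Section NearIdentity.
Variable N : nat.
Implicit Types (q : 'S_N) (u v w : 'I_N).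

Definition near_id q := forall v, q v <= v.+1 /\ v <= (q v).+1.

Definition rise q (k : nat) : bool :=
  [exists v : 'I_N, (v == k :> nat) && (q v == k.+1 :> nat)].

Lemma riseE q v : rise q v = (q v == v.+1 :> nat).
Proof.
apply/existsP/idP => [[u /andP [/eqP /val_inj -> //]] | qv]; by exists v; rewrite eqxx.
Qed.

Lemma rise_ltn q k : rise q k -> k.+1 < N.
Proof. by case/existsP => v /andP [_ /eqP <-]. Qed.

Lemma near_idV q : near_id q -> near_id q^-1%g.
Proof. by move=> nq v; have [] := nq (q^-1%g v); rewrite permKV. Qed.

Lemma near_id_swap q v w : near_id q -> w = v.+1 :> nat -> q v = w -> q w = v.
Proof.
(* The preimage u of v is v - 1 or v + 1 = w; if it were v - 1, then by induction q
   would already map v to v - 1. *)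
move=> nq; move Ek: (v : nat) => k; elim: k v w Ek => [|k IH] v w Ev Ew qv.
all: set u := q^-1%g v; have qu : q u = v by rewrite permKV.
all: clearbody u; have [le_u ge_u] := nq u; rewrite qu in le_u ge_u.
all: have [<- //|ne_uw] := eqVneq u w.
all: have ne_uv : u <> v :> nat.
all: try by move/ord_inj => uv; move: qu; rewrite uv qv => /(congr1 (@nat_of_ord N)); lia.
all: have {}ne_uw : u <> w :> nat by move/ord_inj => uw; rewrite uw eqxx in ne_uw.
  lia.
have Eu : u = k :> nat by lia.
by have := IH u v Eu Ev qu; rewrite qv => wu; case: ne_uw; rewrite wu.
Qed.

Lemma near_id_swapV q v w : near_id q -> w = v.+1 :> nat -> q w = v -> q v = w.
Proof.
move=> nq Ew qw; have qVv : q^-1%g v = w by rewrite -qw permK.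
by rewrite -(near_id_swap (near_idV nq) Ew qVv) permKV.
Qed.

Lemma near_idE q v : near_id q ->
  q v = (if rise q v then v.+1 else if (0 < v) && rise q v.-1 then v.-1 else v) :> nat.
Proof.
move=> nq; have [le_qv ge_qv] := nq v.
rewrite riseE; have [/eqP // | no_rise] := ifPn.
case: ifPn => [/andP [v_gt0 /existsP [u /andP [/eqP Eu /eqP Equ]]] | no_fall].
  have quv : q u = v by apply: ord_inj; lia.
  by rewrite (near_id_swap nq _ quv); lia.
have no_down : (q v).+1 <> v.
  move=> down; move/negP: no_fall; apply; rewrite (_ : v.-1 = q v); last by lia.
  by rewrite riseE (near_id_swapV nq (esym down) (erefl (q v))) -down ltn0Sn eqxx.
by move: no_rise; rewrite eqE /=; lia.
Qed.

Lemma near_id_inj q1 q2 : near_id q1 -> near_id q2 -> rise q1 =1 rise q2 -> q1 = q2.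
Proof. by move=> n1 n2 r12; apply/permP => v; apply/ord_inj; rewrite !near_idE // !r12. Qed.

Lemma count_rise q : count (rise q) (iota 0 N) = #|[set v : 'I_N | rise q v]|.
Proof.
rewrite -val_enum_ord count_map enumT cardE /enum_mem size_filter.
by apply: eq_count => v; rewrite /= inE.
Qed.

Definition rise_window q c L : seq bool := [seq rise q k | k <- iota c L].

Lemma rise_window_inj c L q1 q2 : near_id q1 -> near_id q2 -> c + L = N.-1 ->
    (forall k, rise q1 k -> c <= k) -> (forall k, rise q2 k -> c <= k) ->
  rise_window q1 c L = rise_window q2 c L -> q1 = q2.
Proof.
move=> nq1 nq2 eN c_q1 c_q2 eW; apply: near_id_inj => // k.
have outside q : (forall k, rise q k -> c <= k) -> ~~ (c <= k < c + L) -> rise q k = false.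
  by move=> c_q; apply: contraNF => rk; rewrite c_q //=; have := rise_ltn rk; lia.
have [/andP [ge_kc lt_kcL] | out_k] := boolP (c <= k < c + L); last by rewrite !outside.
have := congr1 (nth false ^~ (k - c)) eW.
by rewrite !(nth_map 0) ?size_iota ?nth_iota ?subnKC // ltn_subLR.
Qed.

Lemma sorted_iota_succ (r : rel nat) i n : (forall k, r k k.+1) -> sorted r (iota i n).
Proof.
move=> r_succ; case: n => //= n.
by elim: n i => //= n IH i; rewrite r_succ IH.
Qed.

Lemma nonadj_rise_window q c L : near_id q -> nonadj (rise_window q c L).
Proof.
move=> nq; rewrite /nonadj sorted_map; apply: sorted_iota_succ => k /=.
apply/negP => /andP [/existsP [v /andP [/eqP Ev /eqP Eqv]]].
case/existsP => w /andP [/eqP Ew /eqP Eqw].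
have Ewv : w = v.+1 :> nat by lia.
have qvw : q v = w by apply: ord_inj; lia.
have := congr1 (@nat_of_ord N) (near_id_swap nq Ewv qvw); lia.
Qed.

Lemma rise_window_in_nonadj_seqs q c L t : near_id q -> c + L <= N ->
  #|[set v : 'I_N | rise q v]| <= t -> rise_window q c L \in nonadj_seqs L t.
Proof.
move=> nq le_N card_t.
rewrite -{2}(size_iota c L) -(size_map (rise q)) mem_nonadj_seqs ?nonadj_rise_window //.
rewrite count_map (leq_trans _ card_t) // -count_rise -(subnKC le_N) iotaD iotaD.
by rewrite !count_cat add0n -addnA; apply: leq_trans (leq_addr _ _) (leq_addl _ _).
Qed.

End NearIdentity.

Section StuckAt.
Variables (N m t : nat).
Implicit Types (p : 'S_N) (I : {set 'I_N}).

Definition stuck p I : {ffun 'I_N -> nat} :=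
  [ffun i => if i \in I then (Defs.pval p i).-1 else Defs.pval p i].

Definition admissible p I : bool := (#|I| <= t) && [forall i in I, m < Defs.pval p i].

Lemma stuck_atP p pe : stuck_at m t p pe <-> exists2 I, admissible p I & stuck p I = pe.
Proof.
split=> [[I [card_I thr_I pe_I]] | [I /andP [card_I /forall_inP thr_I] <-]].
  exists I; first by rewrite /admissible card_I; apply/forall_inP.
  by apply/ffunP => i; rewrite ffunE pe_I.
by exists I; split => // i; rewrite ffunE.
Qed.

Definition confusable p p' : bool :=
  [exists I, exists I', [&& admissible p I, admissible p' I' & stuck p I == stuck p' I']].

Lemma confusable_refl : reflexive confusable.
Proof.
move=> p; have adm0 : admissible p set0.
  by rewrite /admissible cards0; apply/forall_inP => i; rewrite inE.
by apply/existsP; exists set0; apply/existsP; exists set0; rewrite adm0 eqxx.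
Qed.

Lemma confusable_sym : symmetric confusable.
Proof.
suff sym p p' : confusable p p' -> confusable p' p by move=> p p'; apply/idP/idP; apply: sym.
case/existsP => I /existsP [I' /and3P [adm_I adm_I' /eqP eq_stuck]].
by apply/existsP; exists I'; apply/existsP; exists I; rewrite adm_I adm_I' eq_stuck eqxx.
Qed.

Lemma confusable_near_id p p' : confusable p p' ->
  let q := (p^-1 * p')%g in
  [/\ near_id q, forall k, rise q k -> m <= k.+1 & #|[set v : 'I_N | rise q v]| <= t].
Proof.
case/existsP => I /existsP [I' /and3P [_ /andP [card_I' /forall_inP thr_I'] /eqP eq_stuck]] q.
have qp i : q (p i) = p' i by rewrite permM permK.
have near i : [/\ p' i <= (p i).+1, p i <= (p' i).+1 & p' i = (p i).+1 :> nat -> i \in I'].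
  have := congr1 (fun f : {ffun _ -> _} => f i) eq_stuck; rewrite !ffunE /Defs.pval.
  by case: (i \in I); case: (i \in I'); split => //; lia.
have rise_I' (v : 'I_N) : rise q v -> p^-1%g v \in I'.
  rewrite riseE -{1 2}(permKV p v) qp => /eqP up.
  by have [_ _ ->] := near (p^-1%g v).
split.
- by move=> v; have [] := near (p^-1%g v); rewrite -qp permKV.
- move=> k /existsP [v /andP [/eqP <- /eqP qv]].
  have /thr_I' : p^-1%g v \in I' by rewrite rise_I' // riseE qv.
  by rewrite /Defs.pval -qp permKV qv.
rewrite (leq_trans _ card_I') // -(card_imset _ (@perm_inj _ p)).
apply/subset_leq_card/subsetP => v; rewrite inE => /rise_I' v_I'.
by rewrite -(permKV p v) imset_f.
Qed.

Lemma card_confusable p : 0 < m -> m <= N ->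
  #|[set p' | confusable p p']| <= nonadj_count (N - m) t.
Proof.
move=> m_gt0 le_mN; pose code p' := rise_window (p^-1 * p')%g m.-1 (N - m).
rewrite cardE -(size_map code) uniq_leq_size //.
  rewrite map_inj_in_uniq ?enum_uniq // => p1 p2; rewrite !mem_enum !inE => c1 c2 eq_code.
  have [nq1 thr1 _] := confusable_near_id c1; have [nq2 thr2 _] := confusable_near_id c2.
  apply: (mulgI p^-1%g); apply: rise_window_inj eq_code => //; first lia.
    by move=> k /thr1; lia.
  by move=> k /thr2; lia.
move=> _ /mapP [p' + ->]; rewrite mem_enum inE => /confusable_near_id [nq _ card_t].
by apply: rise_window_in_nonadj_seqs => //; lia.
Qed.

Lemma stuck_at_decoder n (E : 'S_n -> 'S_N) :
    (forall s1 s2, confusable (E s1) (E s2) -> s1 = s2) ->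
  exists D : {ffun 'I_N -> nat} -> 'S_n, forall s pe, stuck_at m t (E s) pe -> D pe = s.
Proof.
move=> E_sep; pose decodes s pe := [exists I, admissible (E s) I && (stuck (E s) I == pe)].
exists (fun pe => odflt 1%g [pick s | decodes s pe]) => s pe /stuck_atP [I adm_I stuck_I].
have dec_s : decodes s pe by apply/existsP; exists I; rewrite adm_I stuck_I eqxx.
case: pickP => [s' /existsP [I' /andP [adm_I' /eqP stuck_I']] | /(_ s)]; last by rewrite dec_s.
apply: E_sep; apply/existsP; exists I'; apply/existsP; exists I.
by rewrite adm_I' adm_I stuck_I' stuck_I eqxx.
Qed.

End StuckAt.

Lemma exists_large_independent_set (T : finType) (r : rel T) (K : nat) :
    reflexive r -> symmetric r -> (forall x, #|[set y | r x y]| <= K) ->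
  exists2 C : {set T}, {in C &, forall x y, r x y -> x = y} & #|T| <= #|C| * K.
Proof.
move=> r_refl r_sym deg_r.
pose indep (C : {set T}) := [forall x in C, forall y in C, r x y ==> (x == y)].
have indepP (C : {set T}) : reflect {in C &, forall x y, r x y -> x = y} (indep C).
  apply: (iffP forall_inP) => [C_indep x y xC yC rxy | C_indep x xC].
    by apply/eqP; move/forall_inP: (C_indep x xC) => /(_ y yC) /implyP; apply.
  by apply/forall_inP => y yC; apply/implyP => /C_indep -> //; rewrite eqxx.
have [C maxC _] : {C | maxset indep C & set0 \subset C}.
  by apply: maxset_exists; apply/indepP => x y; rewrite inE.
have /indepP C_indep := maxsetp maxC.
exists C => //.
have dominating x : [exists c in C, r c x].
  apply: contraT => no_nbr; rewrite -(negbTE no_nbr); apply/exists_inP; exists x => //.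
  rewrite -(maxsetsup maxC _ (subsetUr [set x] C)) ?setU11 //.
  apply/indepP => y z; rewrite !inE => /predU1P [-> | yC] /predU1P [-> | zC] //.
  - by move=> rxz; case/negP: no_nbr; apply/exists_inP; exists z; rewrite // r_sym.
  - by move=> ryx; case/negP: no_nbr; apply/exists_inP; exists y.
  exact: C_indep.
have cover : [set: T] \subset \bigcup_(c in C) [set y | r c y].
  apply/subsetP => x _; have /exists_inP [c cC rcx] := dominating x.
  by apply/bigcupP; exists c; rewrite ?inE.
rewrite -cardsT (leq_trans (subset_leq_card cover)) // -sum_nat_const.
elim/big_rec2: _ => [|c n U _ le_Un]; first by rewrite cards0.
by rewrite (leq_trans (leq_card_setU _ _).1) // leq_add.
Qed.

Lemma exists_inj_to_set (T U : finType) (C : {set U}) :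
  #|T| <= #|C| -> exists2 f : T -> U, injective f & forall x, f x \in C.
Proof.
move=> le_TC; exists (fun x => @enum_val _ (mem C) (widen_ord le_TC (enum_rank x))).
  by move=> x y /enum_val_inj /(congr1 val) /= /val_inj /enum_rank_inj.
by move=> x; apply: enum_valP.
Qed.

Lemma leq_fact_expS n k : n`! * n.+1 ^ k <= (n + k)`!.
Proof.
elim: k => [|k IH]; first by rewrite muln1 addn0.
by rewrite addnS factS expnS mulnCA leq_mul // ltnS leq_addr.
Qed.

Lemma expn_Natpow x k : x ^ k = Nat.pow x k.
Proof. by elim: k => // k IH; rewrite expnS IH. Qed.

Lemma log_cond_expn n t m t' : 0 < m -> m < n -> log_cond n t m t' -> (n - m) ^ t <= n ^ t'.
Proof.
move=> m_gt0 lt_mn; rewrite /log_cond => hlog.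
have n_gt1 : Rlt 1 (INR n) by apply: lt_1_INR; apply/ltP; lia.
have nm_gt0 : Rlt 0 (INR (n - m)) by apply: lt_0_INR; apply/ltP; rewrite subn_gt0.
have ln_n_gt0 : Rlt 0 (ln (INR n)) by rewrite -ln_1; apply: ln_increasing; lra.
have ln_le : Rle (ln (pow (INR (n - m)) t)) (ln (pow (INR n) t')).
  rewrite ln_pow // ln_pow; last exact: Rlt_trans Rlt_0_1 n_gt1.
  have := Rmult_le_compat_r _ _ _ (Rlt_le _ _ ln_n_gt0) hlog.
  by rewrite /Rdiv Rmult_assoc Rinv_l ?Rmult_1_r //; apply: Rgt_not_eq.
have : Rle (pow (INR (n - m)) t) (pow (INR n) t').
  apply: Rnot_lt_le => lt_pow; apply: (Rle_not_lt _ _ ln_le).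
  by apply: ln_increasing => //; apply: pow_lt; exact: Rlt_trans Rlt_0_1 n_gt1.
by rewrite -!pow_INR (expn_Natpow (n - m)) (expn_Natpow n) => /INR_le /leP.
Qed.

Theorem theorem1 (n t m t' : nat) :
  0 < n -> 0 < t -> 0 < m -> 0 < t' ->
  m < n -> log_cond n t m t' -> t'.+2 <= m ->
  exists (E : 'S_n -> 'S_(n + t')) (D : {ffun 'I_(n + t') -> nat} -> 'S_n),
    forall (s : 'S_n) (pe : {ffun 'I_(n + t') -> nat}),
      stuck_at m t (E s) pe -> D pe = s.
Proof.
(* 0 < n follows from 0 < m < n, and t = 0 needs no special treatment. *)
move=> _ _ m_gt0 t'_gt0 lt_mn log_t le_m.
have le_mN : m <= n + t' by lia.
have budget : nonadj_count (n + t' - m) t <= n.+1 ^ t'.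
  have -> : n + t' - m = (n - m) + t' by lia.
  apply: nonadj_count_ub; [by rewrite subn_gt0 | by [] | lia |].
  exact: log_cond_expn.
have [C C_sep card_C] := exists_large_independent_set (@confusable_refl _ m t)
  (@confusable_sym _ m t) (fun p => card_confusable t p m_gt0 le_mN).
have le_C : #|'S_n| <= #|C|.
  rewrite card_Sn -(@leq_pmul2r (n.+1 ^ t')) ?expn_gt0 //.
  rewrite (leq_trans (leq_fact_expS n t')) // -card_Sn (leq_trans card_C) //.
  by rewrite leq_mul2l budget orbT.
have [E E_inj E_C] := exists_inj_to_set le_C.
have [D decodes] := stuck_at_decoder (E := E)
  (fun s1 s2 conf => E_inj _ _ (C_sep _ _ (E_C s1) (E_C s2) conf)).
by exists E, D.
Qed.
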